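(* Let $\mathcal{F}$ be an RKHS on $\mathcal{X}$ with kernel $k$ and feature map $\phi(x)=k(x,\cdot)$, and $\mathcal{U}$ an RKHS on $\mathcal{W}=\mathcal{Y}\times\mathcal{Z}$ with kernel $l$ and feature map $\varphi(w)=l(w,\cdot)$. Given an i.i.d. sample $(x_i,y_i,z_i)_{i=1}^n$ from $\mathbb{P}(X,Y,Z)$, set $w_i=(y_i,z_i)$, $\mathbf{y}=(y_1,\dots,y_n)^\top$, $\widehat{\mathcal{C}}_{XW}=\frac1n\sum_i\phi(x_i)\otimes\varphi(w_i)$, $\widehat{\mathcal{C}}_{WX}$ its adjoint, $\widehat{\mathcal{C}}_W=\frac1n\sum_i\varphi(w_i)\otimes\varphi(w_i)$, $\hat{\mathbf{b}}=\frac1n\sum_i y_i\varphi(w_i)$, and for $\lambda_1,\lambda_2>0$ let $$\hat f:=\big(\widehat{\mathcal{C}}_{XW}(\widehat{\mathcal{C}}_W+\lambda_1\mathcal{I})^{-1}\widehat{\mathcal{C}}_{WX}+\lambda_2\mathcal{I}\big)^{-1}\widehat{\mathcal{C}}_{XW}(\widehat{\mathcal{C}}_W+\lambda_1\mathcal{I})^{-1}\hat{\mathbf{b}}.$$ Let $\mathbf{K}_{ij}=k(x_i,x_j)$ and $\mathbf{L}_{ij}=l(w_i,w_j)$ be the Gram matrices and $\mathbf{M}:=\mathbf{K}(\mathbf{L}+n\lambda_1 I)^{-1}\mathbf{L}$, and assume $\mathbf{M}\mathbf{K}+n\lambda_2\mathbf{K}$ is invertible. Then $\hat f=\sum_{i=1}^n\beta_i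 k(x_i,\cdot)$ with $\boldsymbol\beta=(\mathbf{M}\mathbf{K}+n\lambda_2\mathbf{K})^{-1}\mathbf{M}\mathbf{y}$.
   Context: $\mathcal{I}$ denotes the identity operator; $(a\otimes b)u=\langle b,u\rangle a$. *)

From HB Require Import structures.
From mathcomp Require Import all_boot all_order all_algebra.
From mathcomp Require Import boolp classical_sets reals.
Set Implicit Arguments. Unset Strict Implicit. Unset Printing Implicit Defensive.
Import Order.TTheory GRing.Theory Num.Theory.
Local Open Scope ring_scope.

(* A real reproducing kernel Hilbert space on a set X: a real inner-product
   space V, complete for the inner-product norm, whose elements are functions
   on X (via the injective evaluation ev), with feature map feat x = k(x,.)
   satisfying the reproducing property ev f x = <f, feat x>. *)
Record RKHS (R : realType) (X : Type) := {
  rk_space :> lmodType R;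
  ip : rk_space -> rk_space -> R;
  ipC : forall u v, ip u v = ip v u;
  ipDl : forall a u v w, ip (a *: u + v) w = a * ip u w + ip v w;
  ip_ge0 : forall u, 0 <= ip u u;
  ip_eq0 : forall u, ip u u = 0 -> u = 0;
  ip_complete : forall u : nat -> rk_space,
      (forall e : R, 0 < e -> exists N, forall m p, (N <= m)%N -> (N <= p)%N ->
          ip (u m - u p) (u m - u p) < e) ->
      exists v, forall e : R, 0 < e -> exists N, forall m, (N <= m)%N ->
          ip (u m - v) (u m - v) < e;
  ev : rk_space -> X -> R;
  ev_inj : injective ev;
  feat : X -> rk_space;
  reproducing : forall f x, ev f x = ip f (feat x)
}.

Definition kern (R : realType) (X : Type) (H : RKHS R X) (x x' : X) : R :=
  ip (feat H x) (feat H x').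

Definition tens (R : realType) (X1 X2 : Type) (H1 : RKHS R X1) (H2 : RKHS R X2)
  (a : H1) (b : H2) : H2 -> H1 := fun u => ip b u *: a.

(* inverse of an operator A applied to v: the (unique, when A is bijective)
   u with A u = v *)
Definition opinv (R : realType) (V : lmodType R) (A : V -> V) (v : V) : V :=
  xget 0 [set u | A u = v].

(* The operators inverted in the definition of fhat, C_W + lam1 I and
   C_XW R_W C_WX + lam2 I, are monotone plus a positive multiple of the
   identity, hence injective, so opinv returns their unique preimages.  For the
   second one, monotonicity holds because C_XW is the adjoint of C_WX and R_W
   inverts the monotone C_W + lam1 I on the range of C_WX.  On the span of the
   sampled features all these operators act on coefficient vectors through the
   Gram matrices: C_W + lam1 I becomes n^-1 (L + n lam1 I), which is therefore
   invertible, and checking that sum_i beta_i k(x_i, .) solves the equation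
   defining fhat reduces to the normal equation (M K + n lam2 K) beta = M y. *)
From HB Require Import structures.
From mathcomp Require Import all_boot all_order all_algebra.
From mathcomp Require Import boolp classical_sets reals.
Import Order.TTheory GRing.Theory Num.Theory.
Set Implicit Arguments. Unset Strict Implicit. Unset Printing Implicit Defensive.
Local Open Scope ring_scope.

Section InnerProduct.
Variables (R : realType) (T : Type) (H : RKHS R T).

Lemma ip_addl (u v w : H) : ip (u + v) w = ip u w + ip v w.
Proof. by have := ipDl 1 u v w; rewrite scale1r mul1r. Qed.

Lemma ip0l (w : H) : ip 0 w = 0.
Proof. by apply: (addrI (ip 0 w)); rewrite -ip_addl !addr0. Qed.

Lemma ipZl a (u w : H) : ip (a *: u) w = a * ip u w.
Proof. by have := ipDl a u 0 w; rewrite addr0 ip0l addr0. Qed.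

Lemma ipBl (u v w : H) : ip (u - v) w = ip u w - ip v w.
Proof. by rewrite ip_addl -scaleN1r ipZl mulN1r. Qed.

Lemma ipZr a (u w : H) : ip w (a *: u) = a * ip w u.
Proof. by rewrite ipC ipZl ipC. Qed.

Lemma ip_suml (I : Type) (r : seq I) (P : pred I) (f : I -> H) w :
  ip (\sum_(i <- r | P i) f i) w = \sum_(i <- r | P i) ip (f i) w.
Proof. by elim/big_rec2: _ => [|i a b _ <-]; rewrite ?ip0l ?ip_addl. Qed.

Lemma ip_sumr (I : Type) (r : seq I) (P : pred I) (f : I -> H) w :
  ip w (\sum_(i <- r | P i) f i) = \sum_(i <- r | P i) ip w (f i).
Proof. by rewrite ipC ip_suml; apply: eq_bigr => i _; rewrite ipC. Qed.

Lemma ip_le0_eq0 (u : H) : ip u u <= 0 -> u = 0.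
Proof. by move=> le0; apply: ip_eq0; apply/eqP; rewrite eq_le le0 ip_ge0. Qed.

Definition ip_monotone (P : H -> H) := forall u v, 0 <= ip (P u - P v) (u - v).

Lemma shift_monotone P lam :
  ip_monotone P -> 0 <= lam -> ip_monotone (fun u => P u + lam *: u).
Proof.
move=> monP lam_ge0 u v; rewrite opprD addrACA -scalerBr ip_addl ipZl.
by rewrite addr_ge0 ?mulr_ge0 ?ip_ge0.
Qed.

Lemma shift_monotone_inj P lam :
  ip_monotone P -> 0 < lam -> injective (fun u => P u + lam *: u).
Proof.
move=> monP lam_gt0 u v /eqP; rewrite -subr_eq0 opprD addrACA -scalerBr addr_eq0.
move=> /eqP PuvE; apply/eqP; rewrite -subr_eq0; apply/eqP/ip_le0_eq0.
by have := monP u v; rewrite PuvE -scaleNr ipZl mulNr oppr_ge0 pmulr_rle0.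
Qed.

End InnerProduct.

Section LinearCombinations.
Variables (R : realType) (n : nat).

Definition lin_comb (V : lmodType R) (c : 'cV[R]_n) (e : 'I_n -> V) : V :=
  \sum_i c i 0 *: e i.

Lemma lin_combD (V : lmodType R) (c d : 'cV[R]_n) (e : 'I_n -> V) :
  lin_comb (c + d) e = lin_comb c e + lin_comb d e.
Proof. by rewrite /lin_comb -big_split; apply: eq_bigr => i _; rewrite mxE scalerDl. Qed.

Lemma lin_combZ (V : lmodType R) a (c : 'cV[R]_n) (e : 'I_n -> V) :
  lin_comb (a *: c) e = a *: lin_comb c e.
Proof. by rewrite /lin_comb scaler_sumr; apply: eq_bigr => i _; rewrite mxE scalerA. Qed.

Lemma lin_comb0 (V : lmodType R) (e : 'I_n -> V) : lin_comb 0 e = 0.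
Proof. by rewrite /lin_comb big1 // => i _; rewrite mxE scale0r. Qed.

End LinearCombinations.

Definition sampled_op (R : realType) (T1 T2 : Type) (H1 : RKHS R T1) (H2 : RKHS R T2)
  n (a : 'I_n -> H1) (b : 'I_n -> H2) (u : H2) : H1 :=
  n%:R^-1 *: \sum_i tens (a i) (b i) u.

Section SampledOperators.
Variables (R : realType) (T1 T2 : Type) (H1 : RKHS R T1) (H2 : RKHS R T2) (n : nat).

Definition gram (a b : 'I_n -> H2) : 'M[R]_n := \matrix_(i, j) ip (a i) (b j).

Lemma gram_mulmx (a b : 'I_n -> H2) c : gram a b *m c = \col_i ip (a i) (lin_comb c b).
Proof.
apply/matrixP => i j; rewrite !mxE (ord1 j) ip_sumr.
by apply: eq_bigr => k _; rewrite ipZr !mxE mulrC.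
Qed.

Lemma sampled_opB (a : 'I_n -> H1) (b : 'I_n -> H2) :
  {morph sampled_op a b : u v / u - v}.
Proof.
move=> u v; rewrite /sampled_op -scalerBr -sumrB; congr (_ *: _).
by apply: eq_bigr => i _; rewrite /tens ipC ipBl scalerBl !(ipC _ (b i)).
Qed.

Lemma sampled_op0 (a : 'I_n -> H1) (b : 'I_n -> H2) : sampled_op a b 0 = 0.
Proof. by rewrite -(subrr (0 : H2)) sampled_opB subrr. Qed.

Lemma sampled_op_adj (a : 'I_n -> H1) (b : 'I_n -> H2) u h :
  ip (sampled_op a b u) h = ip u (sampled_op b a h).
Proof.
rewrite /sampled_op ipZl ipZr ip_suml ip_sumr; congr (_ * _).
by apply: eq_bigr => i _; rewrite /tens ipZl ipZr mulrC (ipC u).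
Qed.

Lemma sampled_op_col (a : 'I_n -> H1) (b : 'I_n -> H2) u :
  sampled_op a b u = lin_comb (n%:R^-1 *: \col_i ip (b i) u) a.
Proof.
rewrite lin_combZ /sampled_op /lin_comb.
by congr (_ *: _); apply: eq_bigr => i _; rewrite mxE.
Qed.

Lemma sampled_op_lin_comb (a : 'I_n -> H1) (b e : 'I_n -> H2) c :
  sampled_op a b (lin_comb c e) = lin_comb (n%:R^-1 *: (gram b e *m c)) a.
Proof. by rewrite sampled_op_col gram_mulmx. Qed.

Lemma monotone_adjoint_conj (B : H1 -> H2) (B' : H2 -> H1) (P Q : H2 -> H2) :
  {morph B : f g / f - g} -> {morph B' : u v / u - v} ->
  (forall u f, ip (B' u) f = ip u (B f)) ->
  ip_monotone P -> (forall f, P (Q (B f)) = B f) ->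
  ip_monotone (fun f => B' (Q (B f))).
Proof.
move=> BB B'B adjB monP QB f g.
by rewrite -B'B adjB BB -{2}QB -{2}(QB g) ipC; apply: monP.
Qed.

End SampledOperators.

Lemma sampled_op_monotone (R : realType) (T : Type) (H : RKHS R T) n (e : 'I_n -> H) :
  ip_monotone (sampled_op e e).
Proof.
move=> u v; rewrite -sampled_opB /sampled_op ipZl ip_suml.
rewrite mulr_ge0 ?invr_ge0 ?ler0n ?sumr_ge0 // => i _.
by rewrite /tens ipZl ipC sqr_ge0.
Qed.

Lemma opinv_eq (R : realType) (V : lmodType R) (A : V -> V) u v :
  A u = v -> injective A -> opinv A v = u.
Proof. by move=> Auv A_inj; apply: xget_unique => // u' /=; rewrite -Auv => /A_inj. Qed.

Lemma unitmx_ker0 (F : fieldType) n (A : 'M[F]_n) :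
  (forall c : 'cV_n, A *m c = 0 -> c = 0) -> A \in unitmx.
Proof.
move=> ker0; rewrite -unitmx_tr unitmxE unitfE; apply/negP => /det0P[v nz_v vA0].
have /ker0/(congr1 trmx) : A *m v^T = 0.
  by move: (congr1 trmx vA0); rewrite trmx_mul trmxK trmx0.
by rewrite trmxK trmx0 => v0; rewrite v0 eqxx in nz_v.
Qed.

Section Regularized.
Variables (R : realType) (T : Type) (H : RKHS R T) (n : nat) (e : 'I_n -> H) (lam : R).
Hypotheses (n_gt0 : (0 < n)%N) (lam_gt0 : 0 < lam).

Definition regularized_cov (u : H) : H := sampled_op e e u + lam *: u.

Let reg_gram := gram e e + (n%:R * lam)%:M.

Lemma regularized_cov_monotone : ip_monotone regularized_cov.
Proof. exact: shift_monotone (sampled_op_monotone e) (ltW lam_gt0). Qed.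

Lemma regularized_cov_inj : injective regularized_cov.
Proof. exact: shift_monotone_inj (sampled_op_monotone e) lam_gt0. Qed.

Lemma regularized_cov_lin_comb c :
  regularized_cov (lin_comb c e) = lin_comb (n%:R^-1 *: (reg_gram *m c)) e.
Proof.
have n_neq0 : n%:R != 0 :> R by rewrite pnatr_eq0 -lt0n.
rewrite /regularized_cov sampled_op_lin_comb -lin_combZ -lin_combD; congr lin_comb.
by rewrite mulmxDl mul_scalar_mx scalerDr scalerA mulrA mulVf // mul1r.
Qed.

Lemma regularized_gram_unit : reg_gram \in unitmx.
Proof.
apply: unitmx_ker0 => c regc0.
have comb_c0 : lin_comb c e = 0.
  apply: regularized_cov_inj.
  by rewrite regularized_cov_lin_comb regc0 scaler0 lin_comb0 /regularized_cov
    sampled_op0 scaler0 addr0.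
move: regc0; rewrite mulmxDl gram_mulmx comb_c0 mul_scalar_mx.
have -> : \col_i ip (e i) 0 = 0 :> 'cV_n.
  by apply/matrixP => i j; rewrite !mxE ipC ip0l.
rewrite add0r => /eqP; rewrite scaler_eq0 mulf_eq0 pnatr_eq0 eqn0Ngt n_gt0 /=.
by rewrite gt_eqF //= => /eqP.
Qed.

Lemma opinv_regularized_cov q :
  opinv regularized_cov (lin_comb (n%:R^-1 *: q) e) = lin_comb (invmx reg_gram *m q) e.
Proof.
apply: opinv_eq regularized_cov_inj.
by rewrite regularized_cov_lin_comb mulKVmx // regularized_gram_unit.
Qed.

Lemma regularized_cov_opinvK q :
  regularized_cov (opinv regularized_cov (lin_comb (n%:R^-1 *: q) e)) =
  lin_comb (n%:R^-1 *: q) e.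
Proof.
rewrite opinv_regularized_cov regularized_cov_lin_comb mulKVmx //.
exact: regularized_gram_unit.
Qed.

End Regularized.

Lemma invmx_comm (R : comUnitRingType) n (A B : 'M[R]_n) :
  A *m B = B *m A -> invmx A *m B = B *m invmx A.
Proof.
move=> AB; have [uA | nuA] := boolP (A \in unitmx); last by rewrite invmx_out.
by rewrite -{1}(mulmxK uA B) -AB !mulmxA mulVmx ?mul1mx.
Qed.

Lemma two_stage_coef_eq (R : comUnitRingType) n (K L : 'M[R]_n) (a c : R) (y : 'cV_n) :
  let P := invmx (L + a%:M) in
  let M := K *m P *m L in
  (M *m K + c *: K) \in unitmx ->
  let beta := invmx (M *m K + c *: K) *m M *m y in
  L *m (P *m (K *m beta)) + c *: beta = L *m (P *m y).
Proof.
move=> P M unitB beta.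
have PL : P *m L = L *m P.
  by apply: invmx_comm; rewrite mulmxDl mulmxDr scalar_mxC.
have unitK : K \in unitmx.
  by move: unitB; rewrite -mul_scalar_mx -mulmxDl unitmx_mul => /andP[].
have Bbeta : (M *m K + c *: K) *m beta = M *m y.
  by rewrite /beta !mulmxA mulmxV // mul1mx.
clearbody beta; apply: (can_inj (mulKmx unitK)).
rewrite mulmxDr -scalemxAr !(mulmxA L) -PL !mulmxA -/M -Bbeta.
by rewrite mulmxDl scalemxAl.
Qed.

Unset Implicit Arguments.
Theorem proposition2 (R : realType) (X Z : Type)
  (F : RKHS R X) (U : RKHS R (R * Z))
  (n : nat) (hn : (0 < n)%N)
  (x : 'I_n -> X) (y : 'I_n -> R) (z : 'I_n -> Z)
  (lam1 lam2 : R) (hl1 : 0 < lam1) (hl2 : 0 < lam2) :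
  let w : 'I_n -> R * Z := fun i => (y i, z i) in
  let phi := feat F in
  let vphi := feat U in
  let CXW : U -> F := fun u => n%:R^-1 *: \sum_(i < n) tens (phi (x i)) (vphi (w i)) u in
  let CWX : F -> U := fun f => n%:R^-1 *: \sum_(i < n) tens (vphi (w i)) (phi (x i)) f in
  let CW : U -> U := fun u => n%:R^-1 *: \sum_(i < n) tens (vphi (w i)) (vphi (w i)) u in
  let bhat : U := n%:R^-1 *: \sum_(i < n) (y i *: vphi (w i)) in
  let RW : U -> U := opinv (fun u => CW u + lam1 *: u) in
  let fhat : F :=
    opinv (fun f => CXW (RW (CWX f)) + lam2 *: f) (CXW (RW bhat)) in
  let K : 'M[R]_n := \matrix_(i, j) kern F (x i) (x j) in
  let L : 'M[R]_n := \matrix_(i, j) kern U (w i) (w j) in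
  let M : 'M[R]_n := K *m invmx (L + (n%:R * lam1)%:M) *m L in
  let ycol : 'cV[R]_n := \col_i y i in
  (M *m K + (n%:R * lam2) *: K) \in unitmx ->
  let beta : 'cV[R]_n := invmx (M *m K + (n%:R * lam2) *: K) *m M *m ycol in
  fhat = \sum_(i < n) beta i 0 *: phi (x i).
Proof.
move=> w phi vphi CXW CWX CW bhat RW fhat K L M ycol unitB beta.
pose e i := vphi (w i); pose ph i := phi (x i).
have CXWE : CXW =1 sampled_op ph e by [].
have CWXE : CWX =1 sampled_op e ph by [].
have RWE : RW = opinv (regularized_cov e lam1) by [].
have bhatE : bhat = lin_comb (n%:R^-1 *: ycol) e.
  by rewrite lin_combZ; congr (_ *: _); apply: eq_bigr => i _; rewrite mxE.
have S_inj : injective (fun f => CXW (RW (CWX f)) + lam2 *: f).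
  apply: shift_monotone_inj hl2.
  apply: (monotone_adjoint_conj (Q := RW) _ _ _ (regularized_cov_monotone e hl1))
    => [f g|u v|u f|f].
  - exact: sampled_opB.
  - exact: sampled_opB.
  - exact: sampled_op_adj.
  - by rewrite RWE CWXE sampled_op_col regularized_cov_opinvK.
apply: opinv_eq S_inj.
rewrite RWE bhatE !CWXE !CXWE sampled_op_lin_comb opinv_regularized_cov //.
rewrite opinv_regularized_cov // !sampled_op_lin_comb -lin_combZ -lin_combD.
congr lin_comb; have n_neq0 : n%:R != 0 :> R by rewrite pnatr_eq0 -lt0n.
have [-> ->] : gram ph ph = K /\ gram e e = L by [].
by rewrite -(two_stage_coef_eq ycol unitB) scalerDr scalerA mulrA mulVf // mul1r.
Qed.
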